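(* For every $h\ge1$, $\mathsf{sumPI}(\mathrm{MAJ}_h)=\mathsf{maxPI}(\mathrm{MAJ}_h)=2^h$.
   Context: $\mathrm{MAJ}_h:\{0,1\}^{3^h}\to\{0,1\}$ is the recursive majority of three function: the function computed by a complete ternary tree of depth $h$ whose internal nodes are majority-of-three gates and whose leaves are the input bits. For $f:\{0,1\}^N\to\{0,1\}$, with $p=\{p_x\}$ ranging over families of probability distributions on $[N]$, $$\mathsf{sumPI}(f)=\min_{p}\ \max_{x,y:\ f(x)\neq f(y)} \frac{1}{\sum_{i:\,x_i\neq y_i}\sqrt{p_x(i)p_y(i)}},\qquad \mathsf{maxPI}(f)=\min_{p}\ \max_{x,y:\ f(x)\neq f(y)} \frac{1}{\max_{i:\,x_i\neq y_i}\sqrt{p_x(i)p_y(i)}}.$$ *)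

From HB Require Import structures.
From mathcomp Require Import all_boot all_order all_algebra.
From mathcomp Require Import boolp classical_sets reals constructive_ereal ereal.
Set Implicit Arguments. Unset Strict Implicit. Unset Printing Implicit Defensive.
Import Order.TTheory GRing.Theory Num.Theory.
Local Open Scope ring_scope.

Definition maj3 (a b c : bool) : bool := [|| a && b, b && c | a && c].

(* Recursive majority on the 3^h consecutive bits x off, ..., x (off + 3^h - 1):
   complete ternary tree of depth h, children of a node cover consecutive blocks. *)
Fixpoint maj_rec (h : nat) (x : nat -> bool) (off : nat) : bool :=
  match h with
  | 0 => x off
  | h'.+1 => maj3 (maj_rec h' x off) (maj_rec h' x (off + 3 ^ h')%N)
                  (maj_rec h' x (off + 2 * 3 ^ h')%N)
  end.

Definition MAJ (h : nat) (x : {ffun 'I_(3 ^ h) -> bool}) : bool :=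
  maj_rec h (fun n => if insub n is Some i then x i else false) 0.

Section PI.
Variables (R : realType) (N : nat).
Notation input := {ffun 'I_N -> bool}.

Definition distr_family (p : input -> 'I_N -> R) : Prop :=
  forall x, (forall i, 0 <= p x i) /\ \sum_(i < N) p x i = 1.

Definition sum_overlap (p : input -> 'I_N -> R) (x y : input) : R :=
  \sum_(i < N | x i != y i) Num.sqrt (p x i * p y i).

Definition max_overlap (p : input -> 'I_N -> R) (x y : input) : R :=
  \big[Num.max/0]_(i < N | x i != y i) Num.sqrt (p x i * p y i).

(* 1/s as an extended real, with 1/0 = +oo *)
Definition inv_e (s : R) : \bar R := if s == 0 then +oo%E else (s^-1)%:E.

Definition pi_cost (ov : (input -> 'I_N -> R) -> input -> input -> R)
  (f : input -> bool) (p : input -> 'I_N -> R) : \bar R :=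
  ereal_sup [set v | exists x y, f x != f y /\ v = inv_e (ov p x y)].

Definition sumPI (f : input -> bool) : \bar R :=
  ereal_inf [set pi_cost sum_overlap f p | p in distr_family].

Definition maxPI (f : input -> bool) : \bar R :=
  ereal_inf [set pi_cost max_overlap f p | p in distr_family].
End PI.

From HB Require Import structures.
From mathcomp Require Import all_boot all_order all_algebra.
From mathcomp Require Import boolp classical_sets reals constructive_ereal ereal.
From mathcomp Require Import zify.
Import Order.TTheory GRing.Theory Num.Theory.

Set Implicit Arguments.
Unset Strict Implicit.
Unset Printing Implicit Defensive.

(* Upper bound: let every gate hand half of its weight to each of two children that
   agree with its output. If MAJ x <> MAJ y, then at each gate the two chosen pairs of
   children share a child on which x and y evaluate differently, so descending the tree
   yields a leaf where x and y differ that carries weight at least 2^-h under both.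
   Lower bound: call an input hard if no gate sees three equal children. A hard input has
   exactly 2^h sensitive bits, and flipping one keeps it hard. Summing
   sqrt(p_x(j) p_x'(j)) <= (p_x(j) + p_x'(j)) / 2 over all sensitive pairs (x, x' = x^j)
   gives at most the number of hard inputs, while there are 2^h times as many pairs; so
   some sensitive pair, which differs in the single bit j, has overlap at most 2^-h. *)

Section PIBounds.
Variables (R : realType) (N : nat).
Local Notation input := {ffun 'I_N -> bool}.
Local Open Scope ring_scope.
Implicit Types (f : input -> bool) (p : input -> 'I_N -> R) (x y : input).

Definition toggle x (j : 'I_N) : input := [ffun i => x i (+) (i == j)].

Lemma toggleK x j : toggle (toggle x j) j = x.
Proof. by apply/ffunP => i; rewrite !ffunE -addbA addbb addbF. Qed.

Lemma toggle_neq x j i : (x i != toggle x j i) = (i == j).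
Proof. by rewrite ffunE; case: (x i); case: (i == j). Qed.

Definition sensitive f x := [pred j | f (toggle x j) != f x].

Lemma sensitive_toggle f x j : sensitive f x j -> sensitive f (toggle x j) j.
Proof. by rewrite !inE toggleK eq_sym. Qed.

Lemma sqrt_mul_le_mean (a b : R) : 0 <= a -> 0 <= b -> Num.sqrt (a * b) <= (a + b) / 2.
Proof.
move=> a0 b0; rewrite -[leRHS]ger0_norm ?divr_ge0 ?addr_ge0 // -sqrtr_sqr.
by rewrite ler_sqrt ?sqr_ge0 // (leif_AGM2 a b).1.
Qed.

Lemma inv_e_le (k s : R) : 0 < k -> k^-1 <= s -> (inv_e s <= k%:E)%E.
Proof.
move=> k0 ks; have s0 : 0 < s by rewrite (lt_le_trans _ ks) ?invr_gt0.
by rewrite /inv_e gt_eqF // lee_fin -[k]invrK lef_pV2 ?posrE ?invr_gt0.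
Qed.

Lemma inv_e_ge (k s : R) : 0 < k -> 0 <= s -> s <= k^-1 -> (k%:E <= inv_e s)%E.
Proof.
move=> k0; rewrite le0r => /predU1P[->|s0] ks; first by rewrite /inv_e eqxx leey.
by rewrite /inv_e gt_eqF // lee_fin -[k]invrK lef_pV2 ?posrE ?invr_gt0.
Qed.

Lemma sum_overlap_toggle p x j :
  sum_overlap p x (toggle x j) = Num.sqrt (p x j * p (toggle x j) j).
Proof. by rewrite /sum_overlap (big_pred1 j) // => i; rewrite /= toggle_neq. Qed.

Lemma max_overlap_toggle p x j :
  max_overlap p x (toggle x j) = Num.sqrt (p x j * p (toggle x j) j).
Proof.
rewrite /max_overlap (bigD1 j) ?toggle_neq //= big_pred0 => [|i].
  by apply/max_idPl; apply: sqrtr_ge0.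
by rewrite toggle_neq andbN.
Qed.

Section UpperBound.
Variables (f : input -> bool) (p : input -> 'I_N -> R) (k : R).
Hypotheses (k_gt0 : 0 < k) (p_distr : distr_family p).
Hypothesis p_cert : forall x y, f x != f y ->
  exists i, [/\ x i != y i, k^-1 <= p x i & k^-1 <= p y i].

Lemma overlap_cert x y : f x != f y ->
  exists2 i, x i != y i & k^-1 <= Num.sqrt (p x i * p y i).
Proof.
move=> /p_cert[i [xyi pxi pyi]]; exists i => //.
have k'0 : 0 <= k^-1 by rewrite invr_ge0 ltW.
rewrite -[k^-1]ger0_norm // -sqrtr_sqr ler_sqrt ?mulr_ge0 ?(le_trans k'0) //.
by rewrite expr2 ler_pM.
Qed.

Lemma sumPI_le : (sumPI R f <= k%:E)%E.
Proof.
apply: le_trans (ereal_inf_lbound _) _; first by exists p.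
apply: ge_ereal_sup => _ [x [y [fxy ->]]]; apply: inv_e_le => //.
have [i xyi le_k] := overlap_cert fxy; apply: le_trans le_k _.
rewrite /sum_overlap (bigD1 i) //= lerDl sumr_ge0 // => *; exact: sqrtr_ge0.
Qed.

Lemma maxPI_le : (maxPI R f <= k%:E)%E.
Proof.
apply: le_trans (ereal_inf_lbound _) _; first by exists p.
apply: ge_ereal_sup => _ [x [y [fxy ->]]]; apply: inv_e_le => //.
have [i xyi le_k] := overlap_cert fxy; apply: le_trans le_k _.
exact: (le_bigmax_cond _ (fun i => Num.sqrt (p x i * p y i)) xyi).
Qed.

End UpperBound.

Lemma le_pi_cost ov f p x y (e : \bar R) :
  f x != f y -> (e <= inv_e (ov p x y))%E -> (e <= pi_cost ov f p)%E.
Proof. by move=> fxy /le_trans; apply; apply: ereal_sup_ubound; exists x, y. Qed.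

Section LowerBound.
Variables (f : input -> bool) (hard : pred input) (k : nat).
Hypotheses (k_gt0 : (0 < k)%N) (hard_ex : exists x, hard x).
Hypothesis hard_toggle : forall x j, hard x -> sensitive f x j -> hard (toggle x j).
Hypothesis hard_sensitivity : forall x, hard x -> (k <= #|sensitive f x|)%N.

Let edge (u : input * 'I_N) := hard u.1 && sensitive f u.1 u.2.
Let swap (u : input * 'I_N) := (toggle u.1 u.2, u.2).

Let swapK : involutive swap.
Proof. by case=> x j; rewrite /swap toggleK. Qed.

Let edge_swap u : edge (swap u) = edge u.
Proof.
case: u => x j; apply/andP/andP => -[hx sx]; last first.
  by split; [apply: hard_toggle | apply: sensitive_toggle].
by rewrite -[x](toggleK x j); split; [apply: hard_toggle | apply: sensitive_toggle].
Qed.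

Lemma light_sensitive_edge p : distr_family p -> exists x j,
  [/\ hard x, sensitive f x j & Num.sqrt (p x j * p (toggle x j) j) <= k%:R^-1].
Proof.
move=> p_distr; apply: contrapT => no_light.
pose w u := Num.sqrt (p u.1 u.2 * p (swap u).1 u.2).
have heavy u : edge u -> k%:R^-1 < w u.
  case/andP=> hx sx; rewrite ltNge; apply/negP => light.
  by apply: no_light; exists u.1, u.2.
have mass : \sum_(u | edge u) p u.1 u.2 <= #|hard|%:R.
  rewrite /edge -(pair_big_dep hard (sensitive f)) -sum1_card natr_sum /= ler_sum // => x hx.
  have [p_ge0 <-] := p_distr x.
  by rewrite [leRHS](bigID (sensitive f x)) /= lerDl sumr_ge0.
have mass_swap : \sum_(u | edge u) p (swap u).1 u.2 = \sum_(u | edge u) p u.1 u.2.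
  rewrite [RHS](reindex_inj (inv_inj swapK)) /=.
  by apply: eq_big => u; rewrite ?edge_swap // swapK.
have amgm : \sum_(u | edge u) w u <= \sum_(u | edge u) p u.1 u.2.
  apply: le_trans (_ : \sum_(u | edge u) (p u.1 u.2 + p (swap u).1 u.2) / 2 <= _).
    by apply: ler_sum => u _; apply: sqrt_mul_le_mean; apply: (p_distr _).1.
  by rewrite -mulr_suml big_split /= mass_swap mulrDl -splitr.
have count : #|hard|%:R <= \sum_(u | edge u) k%:R^-1 :> R.
  rewrite /edge -(pair_big_dep hard (sensitive f) (fun _ _ => k%:R^-1)) -sum1_card natr_sum.
  apply: ler_sum => x hx.
  rewrite sumr_const -[k%:R^-1 *+ _]mulr_natr ler_pdivlMl ?ltr0n // mulr1 ler_nat.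
  exact: hard_sensitivity.
have [x0 hx0] := hard_ex.
have /card_gt0P[j0 sj0] := leq_trans k_gt0 (hard_sensitivity hx0).
have : \sum_(u | edge u) k%:R^-1 < \sum_(u | edge u) w u.
  by apply: ltr_sum heavy; apply/hasP; exists (x0, j0); rewrite ?mem_index_enum // /edge hx0.
by rewrite ltNge (le_trans amgm (le_trans mass count)).
Qed.

Lemma sumPI_ge : (k%:R%:E <= sumPI R f)%E.
Proof.
apply: le_ereal_inf_tmp => _ [p p_distr <-].
have [x [j [_ sxj light]]] := light_sensitive_edge p_distr.
have fxy : f x != f (toggle x j) by rewrite eq_sym.
apply: (le_pi_cost fxy).
by rewrite sum_overlap_toggle inv_e_ge ?ltr0n ?sqrtr_ge0.
Qed.

Lemma maxPI_ge : (k%:R%:E <= maxPI R f)%E.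
Proof.
apply: le_ereal_inf_tmp => _ [p p_distr <-].
have [x [j [_ sxj light]]] := light_sensitive_edge p_distr.
have fxy : f x != f (toggle x j) by rewrite eq_sym.
apply: (le_pi_cost fxy).
by rewrite max_overlap_toggle inv_e_ge ?ltr0n ?sqrtr_ge0.
Qed.

End LowerBound.
End PIBounds.

Lemma big_nat_blocks (T : Type) (idx : T) (op : Monoid.law idx) (F : nat -> T) m n K :
  \big[op/idx]_(m <= j < m + K * n) F j =
  \big[op/idx]_(k < K) \big[op/idx]_(m + k * n <= j < m + k * n + n) F j.
Proof.
elim: K => [|K IH]; first by rewrite mul0n addn0 big_ord0 big_geq.
rewrite big_ord_recr /= -IH mulSnr addnA.
by rewrite (@big_cat_nat _ _ _ (m + K * n)) //= ?leq_addr // leq_addr.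
Qed.

Definition disagree3 (v : nat -> bool) := (v 0 != v 1) || (v 1 != v 2).

Definition pivotal (v : nat -> bool) k :=
  match k with 0 => v 1 != v 2 | 1 => v 0 != v 2 | _ => v 0 != v 1 end.

Definition maj_support (v : nat -> bool) k :=
  if disagree3 v then pivotal v k else k < 2.

Section Maj3.
Variables (v w : nat -> bool) (k : nat).
Hypotheses (k_lt3 : k < 3) (same_others : forall k', k' < 3 -> k' != k -> w k' = v k').

Lemma maj3_pivotal :
  (maj3 (w 0) (w 1) (w 2) != maj3 (v 0) (v 1) (v 2)) = (w k != v k) && pivotal v k.
Proof.
move: k_lt3 same_others; case: k => [|[|[|//]]] _ same.
- by rewrite /= (same 1) ?(same 2) //; case: (w 0) (v 0) (v 1) (v 2) => [] [] [] [].
- by rewrite /= (same 0) ?(same 2) //; case: (w 1) (v 0) (v 1) (v 2) => [] [] [] [].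
- by rewrite /= (same 0) ?(same 1) //; case: (w 2) (v 0) (v 1) (v 2) => [] [] [] [].
Qed.

Lemma pivotal_others : pivotal w k = pivotal v k.
Proof.
by move: k_lt3 same_others; case: k => [|[|[|//]]] _ same /=; rewrite !same.
Qed.

End Maj3.

Lemma pivotal_disagree3 v k : pivotal v k -> disagree3 v.
Proof.
by rewrite /disagree3; case: k => [|[|k]] /=; case: (v 0) (v 1) (v 2) => [] [] [].
Qed.

Lemma sum_pivotal v : disagree3 v -> \sum_(k < 3) pivotal v k = 2.
Proof.
by rewrite !big_ord_recr big_ord0 /= /disagree3; case: (v 0) (v 1) (v 2) => [] [] [].
Qed.

Lemma sum_maj_support v : \sum_(k < 3) maj_support v k = 2.
Proof.
rewrite /maj_support; case: (boolP (disagree3 v)) => [|_]; first exact: sum_pivotal.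
by rewrite !big_ord_recr big_ord0.
Qed.

Lemma maj_support_common v w : maj3 (v 0) (v 1) (v 2) != maj3 (w 0) (w 1) (w 2) ->
  exists2 k, k < 3 & [&& maj_support v k, maj_support w k & v k != w k].
Proof.
move=> neq.
suff /hasP[k]: has (fun k => [&& maj_support v k, maj_support w k & v k != w k]) (iota 0 3).
  by rewrite mem_iota; exists k.
move: neq; rewrite /= /maj_support /disagree3 /=.
by case: (v 0) (v 1) (v 2) (w 0) (w 1) (w 2) => [] [] [] [] [] [].
Qed.

Definition in_block h off n := off <= n < off + 3 ^ h.

Definition child h (x : nat -> bool) off k := maj_rec h x (off + k * 3 ^ h).

Lemma maj_recS h x off :
  maj_rec h.+1 x off = maj3 (child h x off 0) (child h x off 1) (child h x off 2).
Proof. by rewrite /child /= mul0n addn0 mul1n. Qed.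

Lemma in_block_child h off k n : k < 3 -> in_block h (off + k * 3 ^ h) n -> in_block h.+1 off n.
Proof. rewrite /in_block expnS => k3 /andP[lo hi]; apply/andP; split; nia. Qed.

Lemma in_block_child_uniq h off k k' n :
  in_block h (off + k * 3 ^ h) n -> in_block h (off + k' * 3 ^ h) n -> k = k'.
Proof. rewrite /in_block => /andP[lo hi] /andP[lo' hi']; nia. Qed.

Lemma in_block_childP h off n : in_block h.+1 off n ->
  exists2 k, k < 3 & in_block h (off + k * 3 ^ h) n.
Proof.
rewrite /in_block expnS => /andP[lo hi].
have [n1|n1] := ltnP n (off + 3 ^ h); first by exists 0; rewrite // mul0n addn0 lo.
have [n2|n2] := ltnP n (off + 2 * 3 ^ h); first by exists 1; rewrite // mul1n; lia.
by exists 2 => //; lia.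
Qed.

Lemma maj_rec_eq_on h x y off : (forall n, in_block h off n -> x n = y n) ->
  maj_rec h x off = maj_rec h y off.
Proof.
elim: h off => [|h IH] off same.
  by apply: same; rewrite /in_block addn1 leqnn ltnSn.
by rewrite !maj_recS /child; congr maj3; apply: IH => n nk; apply/same/(in_block_child _ nk).
Qed.

Fixpoint maj_hard h x off : bool :=
  if h is h'.+1 then
    [forall k : 'I_3, maj_hard h' x (off + k * 3 ^ h')] && disagree3 (child h' x off)
  else true.

Lemma maj_hardS h x off : maj_hard h.+1 x off =
  [forall k : 'I_3, maj_hard h x (off + k * 3 ^ h)] && disagree3 (child h x off).
Proof. by []. Qed.

Lemma maj_hard_eq_on h x y off : (forall n, in_block h off n -> x n = y n) ->
  maj_hard h x off = maj_hard h y off.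
Proof.
elim: h off => [//|h IH] off same /=.
have same_child k n : k < 3 -> in_block h (off + k * 3 ^ h) n -> x n = y n.
  by move=> k3 nk; apply/same/(in_block_child k3 nk).
have eq_child k : k < 3 -> child h x off k = child h y off k.
  by move=> k3; apply: maj_rec_eq_on => n; apply: same_child.
congr andb; first by apply: eq_forallb => k; apply: IH => n; apply: (same_child k n (ltn_ord k)).
by rewrite /disagree3 !eq_child.
Qed.

Definition flip_bit (x : nat -> bool) j n := x n (+) (n == j).

Lemma flip_bit_out (x : nat -> bool) j h off n :
  ~~ in_block h off j -> in_block h off n -> flip_bit x j n = x n.
Proof.
move=> jout nin; rewrite /flip_bit; case: eqP => [nj|_]; last exact: addbF.
by rewrite -nj nin in jout.
Qed.

Lemma maj_rec_flip_out h x j off : ~~ in_block h off j ->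
  maj_rec h (flip_bit x j) off = maj_rec h x off.
Proof. by move=> jout; apply: maj_rec_eq_on => n; apply: flip_bit_out. Qed.

Lemma maj_hard_flip_out h x j off : ~~ in_block h off j ->
  maj_hard h (flip_bit x j) off = maj_hard h x off.
Proof. by move=> jout; apply: maj_hard_eq_on => n; apply: flip_bit_out. Qed.

Section FlipInChild.
Variables (h : nat) (x : nat -> bool) (off j k : nat).
Hypotheses (k_lt3 : k < 3) (j_in_k : in_block h (off + k * 3 ^ h) j).

Lemma child_flip_other k' : k' != k -> child h (flip_bit x j) off k' = child h x off k'.
Proof.
move=> k'k; apply: maj_rec_flip_out; apply: contra k'k => j_in_k'.
by rewrite (in_block_child_uniq j_in_k' j_in_k).
Qed.

Lemma maj_recS_flip : (maj_rec h.+1 (flip_bit x j) off != maj_rec h.+1 x off) =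
  (child h (flip_bit x j) off k != child h x off k) && pivotal (child h x off) k.
Proof. by rewrite !maj_recS; apply: maj3_pivotal => // k' _; apply: child_flip_other. Qed.

Lemma pivotal_flip : pivotal (child h (flip_bit x j) off) k = pivotal (child h x off) k.
Proof. by apply: pivotal_others => // k' _; apply: child_flip_other. Qed.

End FlipInChild.

Lemma maj_hard_flip h x off j : maj_hard h x off ->
  maj_rec h (flip_bit x j) off != maj_rec h x off -> maj_hard h (flip_bit x j) off.
Proof.
elim: h off => [//|h IH] off; rewrite !maj_hardS => /andP[/forallP hard_children _] sens.
have [k k3 j_in_k] : exists2 k, k < 3 & in_block h (off + k * 3 ^ h) j.
  by apply: in_block_childP; apply: contraNT sens => /maj_rec_flip_out ->.
move: sens; rewrite (maj_recS_flip x k3 j_in_k) => /andP[sens_k piv_k].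
apply/andP; split; last by apply: (@pivotal_disagree3 _ k); rewrite pivotal_flip.
apply/forallP => k'; have [k'k|k'k] := eqVneq (k' : nat) k.
  by rewrite k'k; apply: IH => //; rewrite -k'k.
rewrite maj_hard_flip_out //; apply: contra k'k => j_in_k'.
by rewrite (in_block_child_uniq j_in_k' j_in_k).
Qed.

Lemma maj_sensitivity h x off : maj_hard h x off ->
  \sum_(off <= j < off + 3 ^ h) (maj_rec h (flip_bit x j) off != maj_rec h x off) = 2 ^ h.
Proof.
elim: h off => [|h IH] off.
  by rewrite addn1 big_nat1 /= /flip_bit eqxx addbT; case: (x off).
rewrite maj_hardS => /andP[/forallP hard_children split].
have -> : 2 ^ h.+1 = \sum_(k < 3) pivotal (child h x off) k * 2 ^ h.
  by rewrite -big_distrl sum_pivotal // expnS.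
rewrite expnS big_nat_blocks.
apply: eq_bigr => k _; rewrite -(IH _ (hard_children k)) big_distrr /=.
by apply: eq_big_nat => j j_in_k; rewrite (maj_recS_flip x (ltn_ord k) j_in_k) andbC mulnb.
Qed.

(* Below every gate the three subtrees evaluate to v, v and ~~ v. *)
Fixpoint hard_input h (v : bool) : nat -> bool :=
  if h is h'.+1 then fun n => hard_input h' (v (+) (n %/ 3 ^ h' == 2)) (n %% 3 ^ h')
  else fun _ => v.

Lemma hard_input_spec h v x off : (forall n, n < 3 ^ h -> x (off + n) = hard_input h v n) ->
  maj_rec h x off = v /\ maj_hard h x off.
Proof.
elim: h v x off => [|h IH] v x off same.
  by split => //; rewrite /= -[off]addn0 same.
have child_spec k : k < 3 -> child h x off k = v (+) (k == 2) /\ maj_hard h x (off + k * 3 ^ h).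
  move=> k3; apply: IH => n n_lt; rewrite -addnA same; last by rewrite expnS; nia.
  by rewrite /= divnMDl ?expn_gt0 // divn_small // addn0 modnMDl modn_small.
rewrite maj_recS maj_hardS /disagree3.
have [-> _] := child_spec 0 isT; have [-> _] := child_spec 1 isT; have [-> _] := child_spec 2 isT.
split; first by case: (v).
apply/andP; split; last by case: (v).
by apply/forallP => k; have [_ ->] := child_spec k (ltn_ord k).
Qed.

Section MajWeight.
Variable R : realType.
Local Open Scope ring_scope.

Fixpoint maj_weight h (x : nat -> bool) off n : R :=
  if h is h'.+1 then
    \sum_(k < 3) (maj_support (child h' x off) k)%:R / 2 * maj_weight h' x (off + k * 3 ^ h')%N n
  else (n == off)%:R.

Lemma maj_weight_ge0 h x off n : 0 <= maj_weight h x off n.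
Proof.
elim: h off => [|h IH] off /=; first exact: ler0n.
by apply: sumr_ge0 => k _; rewrite mulr_ge0 ?divr_ge0 ?ler0n.
Qed.

Lemma maj_weight_sum h x off M : (off + 3 ^ h <= M)%N -> \sum_(n < M) maj_weight h x off n = 1.
Proof.
elim: h off => [|h IH] off M_ge /=.
  rewrite expn0 addn1 in M_ge.
  rewrite (bigD1 (Ordinal M_ge)) //= eqxx big1 ?addr0 // => n.
  by rewrite -val_eqE /= => /negbTE ->.
have child_sum (k : 'I_3) : \sum_(n < M) maj_weight h x (off + k * 3 ^ h)%N n = 1.
  by apply: IH; apply: leq_trans M_ge; have := ltn_ord k; rewrite expnS; nia.
rewrite exchange_big /=.
under eq_bigr => k _ do rewrite -mulr_sumr child_sum mulr1.
by rewrite -mulr_suml -natr_sum sum_maj_support mulfV ?pnatr_eq0.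
Qed.

Lemma maj_weight_cert h x y off : maj_rec h x off != maj_rec h y off ->
  exists n, [/\ (n < off + 3 ^ h)%N, x n != y n,
    (2 ^ h)%:R^-1 <= maj_weight h x off n & (2 ^ h)%:R^-1 <= maj_weight h y off n].
Proof.
elim: h off => [|h IH] off.
  by exists off; rewrite /= eqxx expn0 invr1 addn1 ltnSn.
rewrite !maj_recS => /maj_support_common[k k3 /and3P[sx sy /IH[n [n_lt xyn wx wy]]]].
have term_le z : maj_support (child h z off) k ->
    (2 ^ h)%:R^-1 <= maj_weight h z (off + k * 3 ^ h)%N n ->
    (2 ^ h.+1)%:R^-1 <= maj_weight h.+1 z off n.
  move=> sz wz; rewrite [maj_weight h.+1 _ _ _]/= (bigD1 (Ordinal k3)) //= sz.
  rewrite -[leLHS]addr0 lerD ?sumr_ge0 // => [|i _]; last first.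
    by rewrite mulr_ge0 ?divr_ge0 ?ler0n ?maj_weight_ge0.
  by rewrite mul1r expnS natrM invfM ler_wpM2l ?invr_ge0 ?ler0n.
exists n; split; [|by []|exact: term_le|exact: term_le].
by move: n_lt; rewrite expnS; nia.
Qed.

End MajWeight.

Section RecursiveMajority.
Variable h : nat.
Local Notation input := {ffun 'I_(3 ^ h) -> bool}.

Definition bits (x : input) n := if insub n is Some i then x i else false.

Lemma MAJ_bits x : MAJ x = maj_rec h (bits x) 0.
Proof. by []. Qed.

Lemma bits_ord x (i : 'I_(3 ^ h)) : bits x i = x i.
Proof. by rewrite /bits valK. Qed.

Lemma bits_toggle x j : bits (toggle x j) =1 flip_bit (bits x) j.
Proof.
move=> n; rewrite /bits /flip_bit; case: insubP => [i _ <-|n_ge]; first by rewrite ffunE.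
by case: eqP => // nj; rewrite nj ltn_ord in n_ge.
Qed.

Lemma MAJ_toggle x j : MAJ (toggle x j) = maj_rec h (flip_bit (bits x) j) 0.
Proof. by rewrite MAJ_bits; apply: maj_rec_eq_on => n _; apply: bits_toggle. Qed.

Definition hard_MAJ : pred input := fun x => maj_hard h (bits x) 0.

Lemma hard_MAJ_exists : exists x, hard_MAJ x.
Proof.
pose x : input := [ffun i : 'I_(3 ^ h) => hard_input h true i]; exists x.
apply: (proj2 (@hard_input_spec h true (bits x) 0 _)) => n n_lt.
by rewrite add0n /bits insubT ffunE.
Qed.

Lemma hard_MAJ_toggle x j : hard_MAJ x -> sensitive (@MAJ h) x j -> hard_MAJ (toggle x j).
Proof.
rewrite /hard_MAJ inE MAJ_toggle => hx sx.
rewrite (maj_hard_eq_on (y := flip_bit (bits x) j)) => [|n _]; last exact: bits_toggle.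
exact: maj_hard_flip.
Qed.

Lemma hard_MAJ_sensitivity x : hard_MAJ x -> #|sensitive (@MAJ h) x| = 2 ^ h.
Proof.
move=> hx; rewrite -(maj_sensitivity hx) add0n big_mkord -sum1_card big_mkcond /=.
by apply: eq_bigr => j _; rewrite inE MAJ_toggle; case: ifP.
Qed.

End RecursiveMajority.

Section MajWeights.
Variables (h : nat) (R : realType).
Local Notation input := {ffun 'I_(3 ^ h) -> bool}.
Local Open Scope ring_scope.

Definition maj_weight_family (x : input) (i : 'I_(3 ^ h)) : R :=
  maj_weight R h (bits x) 0 i.

Lemma maj_weight_family_distr : distr_family maj_weight_family.
Proof.
move=> x; split=> [i|]; first exact: maj_weight_ge0.
by rewrite -(@maj_weight_sum R h (bits x) 0 (3 ^ h)) // big_mkord.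
Qed.

Lemma maj_weight_family_cert (x y : input) : MAJ x != MAJ y ->
  exists i, [/\ x i != y i, (2 ^ h)%:R^-1 <= maj_weight_family x i
              & (2 ^ h)%:R^-1 <= maj_weight_family y i].
Proof.
rewrite !MAJ_bits => /(maj_weight_cert R)[n [n_lt xyn wx wy]].
by exists (Ordinal n_lt); rewrite -!bits_ord.
Qed.

End MajWeights.

Local Open Scope ring_scope.

Theorem mainTheorem14 (R : realType) (h : nat) (hh : (1 <= h)%N) :
  @sumPI R (3 ^ h) (@MAJ h) = ((2 ^ h)%:R)%:E /\
  @maxPI R (3 ^ h) (@MAJ h) = ((2 ^ h)%:R)%:E.
Proof.
have pow2_gt0 : (0 < 2 ^ h)%N by rewrite expn_gt0.
have pow2_gt0R : 0 < (2 ^ h)%:R :> R by rewrite ltr0n.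
have sens x : hard_MAJ x -> (2 ^ h <= #|sensitive (@MAJ h) x|)%N.
  by move/hard_MAJ_sensitivity ->.
split; apply/le_anti/andP; split.
- exact (sumPI_le pow2_gt0R (maj_weight_family_distr R) (@maj_weight_family_cert h R)).
- exact (sumPI_ge R pow2_gt0 (hard_MAJ_exists h) (@hard_MAJ_toggle h) sens).
- exact (maxPI_le pow2_gt0R (maj_weight_family_distr R) (@maj_weight_family_cert h R)).
- exact (maxPI_ge R pow2_gt0 (hard_MAJ_exists h) (@hard_MAJ_toggle h) sens).
Qed.
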